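(* Let $d\ge1$ and let $0<\alpha_1\le\alpha_2\le\dots\le\alpha_d<1$. Then the simplices $S_{\alpha_1},\dots,S_{\alpha_d}\subset\mathbb R^d$ have a common point.
   Context: Let $e_1,\dots,e_d$ be the standard basis of $\mathbb R^d$. For $0\le\alpha\le1$, $S_\alpha$ is the $(d-1)$-dimensional simplex (convex hull) with vertices $v_k=e_1+\dots+e_{k-1}+\alpha e_k$ for $k=1,\dots,d$. *)

From HB Require Import structures.
From mathcomp Require Import all_boot all_order all_algebra.
Set Implicit Arguments. Unset Strict Implicit. Unset Printing Implicit Defensive.
Import Order.TTheory GRing.Theory Num.Theory.
Local Open Scope ring_scope.

Definition simplex_vertex (R : realFieldType) (d : nat) (a : R) (k : 'I_d) : 'rV[R]_d :=
  \row_(j < d) (if (j < k)%N then 1 else if j == k then a else 0).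

Definition in_S (R : realFieldType) (d : nat) (a : R) (x : 'rV[R]_d) : Prop :=
  exists w : 'I_d -> R,
    (forall k, 0 <= w k) /\ \sum_(k < d) w k = 1 /\
    x = \sum_(k < d) w k *: simplex_vertex a k.

(** Let [N] count the successes among independent trials of success
    probabilities [alpha_1, ..., alpha_d], and take [x_j := P(N > j)].
    Conditioning on the [i]-th trial gives
    [x_j = alpha_i P(N' >= j) + (1 - alpha_i) P(N' > j)], where [N'] counts the
    other [d - 1] trials; this is exactly the [j]-th coordinate of the convex
    combination of the vertices of [S_(alpha_i)] with weights [P(N' = k)].
    Hence [x] lies in every [S_(alpha_i)]. *)

From HB Require Import structures.
From mathcomp Require Import all_boot all_order all_algebra.
From mathcomp Require Import ring lra.
Import Order.TTheory GRing.Theory Num.Theory.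
Local Open Scope ring_scope.

Section TailProbability.
Context {R : comNzRingType}.

(* [tail_prob s j] is the probability that at least [j] of independent events
   with probabilities [s] occur, computed by conditioning on the first one. *)
Fixpoint tail_prob (s : seq R) (j : nat) : R :=
  match s, j with
  | [::], 0%N => 1
  | [::], _.+1 => 0
  | _ :: _, 0%N => 1
  | a :: s', j'.+1 => a * tail_prob s' j' + (1 - a) * tail_prob s' j
  end.

Lemma tail_prob0 s : tail_prob s 0 = 1.
Proof. by case: s. Qed.

Lemma tail_prob_gt_size s j : (size s < j)%N -> tail_prob s j = 0.
Proof.
elim: s j => [|a s IHs] [|j] //= ltsj.
by rewrite !IHs ?mulr0 ?addr0 // ltnW.
Qed.

Lemma tail_prob_cat_cons s1 a s2 j :
  tail_prob (s1 ++ a :: s2) j.+1 =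
  a * tail_prob (s1 ++ s2) j + (1 - a) * tail_prob (s1 ++ s2) j.+1.
Proof.
elim: s1 j => [|b s1 IHs1] [|j] //=; rewrite !IHs1 ?tail_prob0; ring.
Qed.

End TailProbability.

Lemma tail_prob_bounds {R : realDomainType} (s : seq R) :
  (forall a, a \in s -> 0 <= a <= 1) -> forall j,
  [/\ 0 <= tail_prob s j.+1, tail_prob s j.+1 <= tail_prob s j &
      tail_prob s j <= 1].
Proof.
elim: s => [|a s IHs] s01 j; first by case: j => /= *; split; lra.
have /andP[a_ge0 a_le1] := s01 a (mem_head _ _).
have {}IHs := IHs (fun b sb => s01 b (mem_behead (s := a :: s) sb)).
case: j => [|j] /=.
  by have [? ? ?] := IHs 0%N; rewrite tail_prob0; split; nra.
have [? ? ?] := IHs j; have [? ? ?] := IHs j.+1.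
by split; nra.
Qed.

Lemma sumr_diff_succ (V : zmodType) (T : nat -> V) m n : (m <= n)%N ->
  \sum_(m <= k < n) (T k - T k.+1) = T m - T n.
Proof.
move=> le_mn; rewrite -opprB -(telescope_sumr T le_mn) -sumrN.
by apply: eq_bigr => k _; rewrite opprB.
Qed.

Section SimplexPoints.
Variables (R : realFieldType) (d : nat) (a : R).

Lemma sum_simplex_vertex_coord (w : 'I_d -> R) (j : 'I_d) :
  (\sum_(k < d) w k *: simplex_vertex a k) 0 j =
  a * w j + \sum_(k < d | (j < k)%N) w k.
Proof.
rewrite summxE (bigD1 j) //= !mxE ltnn eqxx mulrC; congr (_ + _).
rewrite big_mkcond [RHS]big_mkcond /=; apply: eq_bigr => k _.
rewrite !mxE [j == k]eq_sym; case: eqVneq => [->|_]; first by rewrite ltnn.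
by case: ifP; rewrite ?mulr1 ?mulr0.
Qed.

Lemma in_S_tail_mix (T : nat -> R) :
  T 0%N = 1 -> T d = 0 -> (forall k, (k < d)%N -> T k.+1 <= T k) ->
  in_S a (\row_(j < d) (a * T j + (1 - a) * T j.+1)).
Proof.
move=> T0 Td T_antitone.
have sum_weights m : (m <= d)%N -> \sum_(m <= k < d) (T k - T k.+1) = T m.
  by move=> le_md; rewrite sumr_diff_succ // Td subr0.
exists (fun k : 'I_d => T k - T k.+1); split; [|split].
- by move=> k; rewrite subr_ge0 T_antitone.
- by rewrite -(big_mkord xpredT (fun k => T k - T k.+1)) sum_weights.
apply/rowP => j; rewrite sum_simplex_vertex_coord !mxE.
have -> : \sum_(k < d | (j < k)%N) (T k - T k.+1) = T j.+1.
  by rewrite -(big_geq_mkord _ _ xpredT (fun k => T k - T k.+1)) sum_weights.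
ring.
Qed.

End SimplexPoints.

Lemma in_S_tail_prob (R : realFieldType) (d : nat) (s1 s2 : seq R) (a : R) :
  size (s1 ++ a :: s2) = d -> (forall b, b \in s1 ++ a :: s2 -> 0 <= b <= 1) ->
  in_S a (\row_(j < d) tail_prob (s1 ++ a :: s2) j.+1).
Proof.
move=> size_s s01.
have r01 b : b \in s1 ++ s2 -> 0 <= b <= 1.
  by rewrite mem_cat => b12; apply: s01; rewrite mem_cat inE orbCA b12 orbT.
have size_r : (size (s1 ++ s2) < d)%N by rewrite -size_s !size_cat addnS.
have -> : \row_(j < d) tail_prob (s1 ++ a :: s2) j.+1 =
          \row_(j < d) (a * tail_prob (s1 ++ s2) j + (1 - a) * tail_prob (s1 ++ s2) j.+1).
  by apply/rowP => j; rewrite !mxE tail_prob_cat_cons.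
apply: in_S_tail_mix; [exact: tail_prob0 | exact: tail_prob_gt_size |].
by move=> k _; have [] := tail_prob_bounds _ r01 k.
Qed.

Theorem lemma2p2 (R : realFieldType) (d : nat) (alpha : 'I_d -> R) :
  (0 < d)%N ->
  (forall i, 0 < alpha i) ->
  (forall i, alpha i < 1) ->
  (forall i j : 'I_d, (i <= j)%N -> alpha i <= alpha j) ->
  exists x : 'rV[R]_d, forall i, in_S (alpha i) x.
Proof.
move=> _ alpha_gt0 alpha_lt1 _.
exists (\row_(j < d) tail_prob [seq alpha k | k <- enum 'I_d] j.+1) => i.
move: (size_enum_ord d); case/splitPr: (mem_enum 'I_d i) => e1 e2 size_e.
rewrite map_cat /=; apply: in_S_tail_prob; rewrite -map_cons -map_cat.
  by rewrite size_map.
by move=> _ /mapP[k _ ->]; rewrite !ltW.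
Qed.
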